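(* Let $G$ be a connected graph with $n\ge 13$ vertices. Suppose one of the following holds: (1) $\Delta(G)=n-1$ and $e(G)=n+k$ for some $1\le k\le 10$; (2) $\Delta(G)=n-2$ and $e(G)=n+k$ for some $5\le k\le 10$; (3) $\Delta(G)=n-3$ and $e(G)=n+k$ for some $8\le k\le 10$. Then $R(G)>\sqrt{n-1}+\frac{2(k+1)}{n\sqrt{n-1}}$.
   Context: All graphs are finite and simple; $e(G)$ is the number of edges and $\Delta(G)$ the maximum degree. For a vertex $u$, $d(u)$ is its degree. The Randić index is $R(G)=\sum_{\{u,v\}\in E(G)} \frac{1}{\sqrt{d(u)d(v)}}$. *)

From HB Require Import structures.
From mathcomp Require Import all_boot all_order all_algebra.
Set Implicit Arguments. Unset Strict Implicit. Unset Printing Implicit Defensive.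
Import Order.TTheory GRing.Theory Num.Theory.

Definition simple_graph (T : finType) (g : rel T) : Prop :=
  symmetric g /\ irreflexive g.

Definition connected_graph (T : finType) (g : rel T) : Prop :=
  forall x y : T, connect g x y.

Definition deg (T : finType) (g : rel T) (u : T) : nat := #|[set v | g u v]|.

Definition max_deg (T : finType) (g : rel T) : nat := (\max_(u : T) deg g u)%N.

Definition edge_set (T : finType) (g : rel T) : {set {set T}} :=
  [set [set u; v] | u in [set: T], v in [set w | g u w]].

Definition num_edges (T : finType) (g : rel T) : nat := #|edge_set g|.

(* Randic index: sum over unordered edges = half the sum over ordered adjacent pairs *)
Definition randic (R : rcfType) (T : finType) (g : rel T) : R :=
  (2%:R)^-1 * \sum_(u : T) \sum_(v : T | g u v)
      (Num.sqrt ((deg g u)%:R * (deg g v)%:R))^-1.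

(* Let c be a vertex of maximum degree D = n - 1 - j, j <= 2.  For an edge uv
   avoiding c, the stars of c, u and v share at most three edges, so
   d_u + d_v <= e(G) + 3 - D <= 16.  The weight 1/sqrt (D d_v) of a hub edge cv
   is 1/sqrt D minus d_v - 1 equal shares, one charged to each other edge at v;
   an edge uv avoiding c keeps at least 13/200 after paying the shares of u and
   v.  Summing, R(G) >= sqrt D + 13/200 (e(G) - D), which exceeds the claimed
   bound in the stated ranges of k. *)

From HB Require Import structures.
From mathcomp Require Import all_boot all_order all_algebra.
From mathcomp Require Import ring lra zify.
Import Order.TTheory GRing.Theory Num.Theory.

Set Implicit Arguments.
Unset Strict Implicit.
Unset Printing Implicit Defensive.

Section EdgeCounting.
Variables (T : finType) (g : rel T).
Hypotheses (g_sym : symmetric g) (g_irr : irreflexive g).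

Lemma set2_injr (a x y : T) : x != a -> y != a -> [set a; x] = [set a; y] -> x = y.
Proof.
move=> xa ya E; have : y \in [set a; x] by rewrite E set22.
by rewrite in_set2 (negbTE ya) => /eqP.
Qed.

Lemma card_imset_set2 (a : T) (S : {set T}) : a \notin S ->
  #|[set [set a; x] | x in S]| = #|S|.
Proof.
move=> aS; apply: card_in_imset => x y xS yS.
by apply: set2_injr; apply: contraNneq aS => <-.
Qed.

Lemma mem_edge_set u v : g u v -> [set u; v] \in edge_set g.
Proof. by move=> huv; apply/imset2P; exists u v; rewrite ?inE. Qed.

Lemma deg_gt0 u v : g u v -> (0 < deg g u)%N.
Proof. by move=> huv; apply/card_gt0P; exists v; rewrite inE. Qed.

Lemma sum_deg_arcs : (\sum_u deg g u = #|[set p : T * T | g p.1 p.2]|)%N.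
Proof.
rewrite -sum1_card; under eq_bigr do rewrite /deg -sum1_card.
by rewrite pair_big_dep; apply: eq_bigl => -[u v]; rewrite !inE.
Qed.

Lemma handshake : (2 * num_edges g <= \sum_u deg g u)%N.
Proof.
pose up := [set p : T * T | g p.1 p.2 && (enum_rank p.1 < enum_rank p.2)%N].
pose down := [set (p.2, p.1) | p in up].
have edges_up : edge_set g \subset [set [set p.1; p.2] | p in up].
  apply/subsetP => e /imset2P[u v _]; rewrite inE => huv ->.
  have : enum_rank u != enum_rank v.
    by apply: contraTneq huv => /enum_rank_inj ->; rewrite g_irr.
  rewrite neq_ltn => /orP[uv | vu]; apply/imsetP.
    by exists (u, v); rewrite // inE huv uv.
  by exists (v, u); rewrite ?inE /= 1?g_sym ?huv // setUC.
have up_down : [disjoint up & down].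
  apply/pred0P => q /=; apply/negP => /andP[q_up /imsetP[p p_up q_def]].
  move: q_up p_up; rewrite q_def !inE => /andP[_ lt21] /andP[_ /(ltn_trans lt21)].
  by rewrite ltnn.
have down_arcs : up :|: down \subset [set p : T * T | g p.1 p.2].
  apply/subsetP => q /setUP[|/imsetP[p]]; rewrite !inE; first by case/andP.
  by case/andP=> huv _ ->; rewrite /= g_sym.
have card_down : #|down| = #|up| by apply: card_imset => -[? ?] [? ?] [-> ->].
rewrite sum_deg_arcs mul2n -addnn.
apply: leq_trans (subset_leq_card down_arcs).
rewrite cardsU (disjoint_setI0 up_down) cards0 subn0 card_down.
have edges_le_up : (num_edges g <= #|up|)%N.
  exact: leq_trans (subset_leq_card edges_up) (leq_imset_card _ _).
by rewrite leq_add.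
Qed.

Lemma setI_eq0_sep (U : finType) (P : pred U) (E E' : {set U}) :
  {in E, forall e, P e} -> {in E', forall e, ~~ P e} -> E :&: E' = set0.
Proof.
move=> PE PE'; apply/setP => e; rewrite !inE.
by apply/negP => /andP[/PE Pe /PE']; rewrite Pe.
Qed.

Lemma card_setD_ge (A B : {set T}) : (#|A| <= #|A :\: B| + #|B|)%N.
Proof.
apply: leq_trans (leq_card_setU _ _); apply: subset_leq_card.
by apply/subsetP => x xA; rewrite !inE xA andbT orNb.
Qed.

(* The edges at c, at u but not c, and at v but not c or u are pairwise distinct. *)
Lemma deg_hub_edge_le c u v : g u v -> u != c -> v != c ->
  (deg g c + deg g u + deg g v <= num_edges g + 3)%N.
Proof.
move=> huv uc vc; have vu : v != u by apply: contraTneq huv => ->; rewrite g_irr.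
set Nc := [set x | g c x]; set Nu := [set x | g u x] :\ c.
set Nv := [set x | g v x] :\: [set c; u].
set Ec := [set [set c; x] | x in Nc]; set Eu := [set [set u; x] | x in Nu].
set Ev := [set [set v; x] | x in Nv].
have [cNc uNu vNv] : [/\ c \notin Nc, u \notin Nu & v \notin Nv].
  by rewrite !inE !g_irr !andbF.
have c_Eu : {in Eu, forall e : {set T}, c \notin e}.
  move=> e /imsetP[x]; rewrite !inE => /andP[xc _] ->.
  by rewrite !inE !(eq_sym c) (negbTE uc) (negbTE xc).
have c_Ev : {in Ev, forall e : {set T}, c \notin e}.
  move=> e /imsetP[x]; rewrite !inE => /andP[/norP[xc _] _] ->.
  by rewrite !inE !(eq_sym c) (negbTE vc) (negbTE xc).
have u_Ev : {in Ev, forall e : {set T}, u \notin e}.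
  move=> e /imsetP[x]; rewrite !inE => /andP[/norP[_ xu] _] ->.
  by rewrite !inE !(eq_sym u) (negbTE vu) (negbTE xu).
have c_Ec : {in Ec, forall e : {set T}, c \in e}.
  by move=> e /imsetP[x _ ->]; rewrite set21.
have u_Eu : {in Eu, forall e : {set T}, u \in e}.
  by move=> e /imsetP[x _ ->]; rewrite set21.
have card_E : #|Ec :|: Eu :|: Ev| = (#|Nc| + #|Nu| + #|Nv|)%N.
  rewrite cardsU setIUl (setI_eq0_sep c_Ec c_Ev) (setI_eq0_sep u_Eu u_Ev) setU0.
  rewrite cards0 subn0 cardsU (setI_eq0_sep c_Ec c_Eu) cards0 subn0.
  by rewrite !card_imset_set2.
have sub_E : Ec :|: Eu :|: Ev \subset edge_set g.
  apply/subsetP => e; rewrite !inE -!orbA => /or3P[] /imsetP[x]; rewrite !inE.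
  - by move=> hx ->; apply: mem_edge_set.
  - by case/andP=> _ hx ->; apply: mem_edge_set.
  - by case/andP=> _ hx ->; apply: mem_edge_set.
have du : (deg g u <= #|Nu| + 1)%N.
  by rewrite /deg (cardsD1 c) addnC leq_add2l leq_b1.
have dv : (deg g v <= #|Nv| + 2)%N.
  apply: leq_trans (card_setD_ge _ [set c; u]) _.
  by rewrite leq_add2l cards2; case: (c != u).
have := subset_leq_card sub_E; rewrite card_E -/(num_edges g) -/(deg g c).
lia.
Qed.

End EdgeCounting.

Local Open Scope ring_scope.

Section ArcSums.
Variables (R : zmodType) (T : finType) (g : rel T) (c : T).
Hypotheses (g_sym : symmetric g) (g_irr : irreflexive g).

Lemma sum_arcs_hub (F : T -> T -> R) : (forall u v, F u v = F v u) ->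
  \sum_u \sum_(v | g u v) F u v =
  (\sum_(v | g c v) F c v) *+ 2 + \sum_(u | u != c) \sum_(v | g u v && (v != c)) F u v.
Proof.
move=> F_sym; under eq_bigr do rewrite (bigID (pred1 c)) /=.
rewrite big_split /= [in RHS]mulr2n -addrA; congr (_ + _).
  rewrite [RHS]big_mkcond; apply: eq_bigr => u _.
  case: (boolP (g c u)) => [hcu | ncu].
    by rewrite (big_pred1 c) => [|v /=]; [apply: F_sym | rewrite g_sym andb_idl // => /eqP->].
  rewrite big_pred0 // => v /=; apply: contraNF ncu => /andP[huv /eqP <-].
  by rewrite g_sym.
rewrite (bigD1 c) //=; congr (_ + _); apply: eq_bigl => v.
by case: (boolP (g c v)) => // hcv; apply: contraTneq hcv => ->; rewrite g_irr.
Qed.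

Lemma sum_arcs_avoid_swap (G : T -> R) :
  \sum_(u | u != c) \sum_(v | g u v && (v != c)) G u =
  \sum_(u | u != c) \sum_(v | g u v && (v != c)) G v.
Proof.
rewrite (exchange_big_dep (fun v => v != c)) /=; last by move=> u v _ /andP[].
by apply: eq_bigr => v vc; apply: eq_bigl => u; rewrite vc andbT g_sym andbC.
Qed.

End ArcSums.

Lemma sumr1_deg (R : pzSemiRingType) (T : finType) (g : rel T) (u : T) :
  \sum_(v | g u v) (1 : R) = (deg g u)%:R.
Proof. by rewrite sumr_const; congr (_ *+ _); apply: eq_card => v; rewrite inE. Qed.

Lemma sqrtr_ge (R : rcfType) (a b : R) : 0 <= b -> b ^+ 2 <= a -> b <= Num.sqrt a.
Proof. by move=> b_ge0 le_b2a; rewrite -(ger0_norm b_ge0) -sqrtr_sqr ler_wsqrtr. Qed.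

Lemma invfM_split (R : fieldType) (s X : R) : s != 0 -> X != 0 -> X + 1 != 0 ->
  (s * X)^-1 = s^-1 - (X ^+ 2 - 1) * (s^-1 / (X * (X + 1))).
Proof. by move=> s0 X0 X1; field; rewrite s0 X0 X1. Qed.

Section ExcessPoly.
Variable R : realFieldType.

Lemma excess_poly_chords (P S : R) : 1 <= P -> P <= 8 -> S <= P + 1 ->
  S <= 566/100 + 177/1000 * (P - 8) -> 2 + 36/70 * (P - 1) <= S ->
  13/200 * (P * P + P * S + P) <= P + S + 1 - 3163/10000 * (S ^+ 2 - 2 * P + S).
Proof. by move=> *; nra. Qed.

(* [excess_poly] in terms of P = X Y and S = X + Y; the bounds on S used by
   [excess_poly_chords] are chords of the curves S^2 = 16 + 2P and S^2 = 4P. *)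
Lemma excess_poly_sym (P S : R) : 1 <= P -> 4 * P <= S ^+ 2 ->
  S ^+ 2 - 2 * P <= 16 -> 0 <= S -> S <= P + 1 ->
  13/200 * (P * P + P * S + P) <= P + S + 1 - 3163/10000 * (S ^+ 2 - 2 * P + S).
Proof.
move=> P_ge1 PS_amgm PS_16 S_ge0 S_le.
have P_le8 : P <= 8 by lra.
have chord_hi : 16 + 2 * P <= (566/100 + 177/1000 * (P - 8)) ^+ 2.
  by have := sqr_ge0 (P - 8); nra.
have S_hi : S <= 566/100 + 177/1000 * (P - 8) by rewrite leNgt; apply/negP; nra.
have P_mid : 0 <= (P - 1) * (8 - P) by apply: mulr_ge0; lra.
have chord_lo : (2 + 36/70 * (P - 1)) ^+ 2 <= 4 * P by nra.
have S_lo : 2 + 36/70 * (P - 1) <= S by rewrite leNgt; apply/negP; nra.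
exact: excess_poly_chords.
Qed.

(* [weight_sub_shares_ge] with denominators cleared: X and Y are the square
   roots of the degrees of a light edge, and e stands for 1/sqrt D, D >= 10. *)
Lemma excess_poly (X Y e : R) : 1 <= X -> 1 <= Y -> X ^+ 2 + Y ^+ 2 <= 16 ->
  0 <= e -> e <= 3163/10000 ->
  13/200 * (X * Y * (X + 1) * (Y + 1)) <=
    (X + 1) * (Y + 1) - e * (Y * (Y + 1)) - e * (X * (X + 1)).
Proof.
move=> X_ge1 Y_ge1 XY_16 e_ge0 e_le.
have XY_ge1 : 1 <= X * Y by rewrite mulr_ege1.
have amgm : 4 * (X * Y) <= (X + Y) ^+ 2 by have := sqr_ge0 (X - Y); nra.
have sq16 : (X + Y) ^+ 2 - 2 * (X * Y) <= 16 by rewrite sqrrD; lra.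
have sum_le : X + Y <= X * Y + 1 by nra.
have := excess_poly_sym XY_ge1 amgm sq16 (ltac:(lra) : 0 <= X + Y) sum_le.
have -> : X * Y * (X + 1) * (Y + 1) = (X * Y) * (X * Y) + (X * Y) * (X + Y) + X * Y.
  by ring.
have -> : (X + 1) * (Y + 1) - e * (Y * (Y + 1)) - e * (X * (X + 1)) =
    X * Y + (X + Y) + 1 - e * ((X + Y) ^+ 2 - 2 * (X * Y) + (X + Y)) by ring.
have : 0 <= (X + Y) ^+ 2 - 2 * (X * Y) + (X + Y) by rewrite sqrrD; nra.
move: (_ + (X + Y)) => Z Z_ge0; nra.
Qed.

End ExcessPoly.

Lemma weight_sub_shares_ge (R : rcfType) (p q D : nat) :
  (0 < p)%N -> (0 < q)%N -> (p + q <= 16)%N -> (10 <= D)%N ->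
  13/200 <= (Num.sqrt (p%:R * q%:R))^-1
     - (Num.sqrt (D%:R : R))^-1 / (Num.sqrt p%:R * (Num.sqrt p%:R + 1))
     - (Num.sqrt D%:R)^-1 / (Num.sqrt q%:R * (Num.sqrt q%:R + 1)).
Proof.
rewrite -(ler_nat R _ 16) -(ler_nat R 10) natrD => p_gt0 q_gt0 pq_le D_ge.
have [p_ge1 q_ge1] : 1 <= p%:R :> R /\ 1 <= q%:R :> R by rewrite !ler1n.
rewrite sqrtrM ?ler0n //.
set X := Num.sqrt (p%:R : R); set Y := Num.sqrt (q%:R : R); set s := Num.sqrt (D%:R : R).
have X_ge1 : 1 <= X by apply: sqrtr_ge; rewrite ?expr1n; lra.
have Y_ge1 : 1 <= Y by apply: sqrtr_ge; rewrite ?expr1n; lra.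
have X2 : X ^+ 2 = p%:R by rewrite sqr_sqrtr ?ler0n.
have Y2 : Y ^+ 2 = q%:R by rewrite sqr_sqrtr ?ler0n.
have s_ge : 3162/1000 <= s by apply: sqrtr_ge; lra.
have s_inv_le : s^-1 <= 3163/10000.
  by rewrite -div1r ler_pdivrMr; lra.
have XY16 : X ^+ 2 + Y ^+ 2 <= 16 by rewrite X2 Y2.
have s_inv_ge0 : 0 <= s^-1 by rewrite invr_ge0 sqrtr_ge0.
have := excess_poly X_ge1 Y_ge1 XY16 s_inv_ge0 s_inv_le.
have [X_gt0 Y_gt0 s_gt0] : [/\ 0 < X, 0 < Y & 0 < s] by split; lra.
have den_gt0 : 0 < X * Y * (X + 1) * (Y + 1) by rewrite !mulr_gt0 // addr_gt0.
have [X0 Y0 X1 Y1 s0] : [/\ X != 0, Y != 0, X + 1 != 0, Y + 1 != 0 & s != 0].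
  by split; apply/eqP; lra.
have -> : (X * Y)^-1 - s^-1 / (X * (X + 1)) - s^-1 / (Y * (Y + 1)) =
    ((X + 1) * (Y + 1) - s^-1 * (Y * (Y + 1)) - s^-1 * (X * (X + 1)))
    / (X * Y * (X + 1) * (Y + 1)).
  by field; rewrite X0 Y0 X1 Y1 s0.
by rewrite ler_pdivlMr.
Qed.

Definition arc_weight (R : rcfType) (T : finType) (g : rel T) (u v : T) : R :=
  (Num.sqrt ((deg g u)%:R * (deg g v)%:R))^-1.

(* The deficit 1/sqrt D - 1/sqrt (D d_u) of the hub edge cu, spread evenly
   over the d_u - 1 other edges at u. *)
Definition hub_share (R : rcfType) (T : finType) (g : rel T) (c u : T) : R :=
  (Num.sqrt (deg g c)%:R)^-1 / (Num.sqrt (deg g u)%:R * (Num.sqrt (deg g u)%:R + 1)).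

Lemma hub_share_ge0 (R : rcfType) (T : finType) (g : rel T) (c u : T) :
  0 <= hub_share R g c u.
Proof.
by rewrite divr_ge0 ?invr_ge0 ?sqrtr_ge0 // mulr_ge0 ?addr_ge0 ?sqrtr_ge0.
Qed.

Section HubBound.
Variables (R : rcfType) (T : finType) (g : rel T) (c : T).
Hypotheses (g_sym : symmetric g) (g_irr : irreflexive g).
Hypothesis hub_deg : (10 <= deg g c)%N.
Hypothesis light_edges :
  forall u v, g u v -> u != c -> v != c -> (deg g u + deg g v <= 16)%N.

Local Notation avoid_sum F :=
  (\sum_(u | u != c) \sum_(v | g u v && (v != c)) F u v).
Local Notation share := (hub_share R g c).
Local Notation s := (Num.sqrt (deg g c)%:R : R).

Lemma sqrt_hub_gt0 : 0 < s.
Proof. by rewrite sqrtr_gt0 ltr0n (leq_trans _ hub_deg). Qed.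

Lemma hub_arc_weightE v : g c v ->
  arc_weight R g c v = s^-1 - \sum_(x | g v x && (x != c)) share v.
Proof.
move=> hcv; have hvc : g v c by rewrite g_sym.
have -> : \sum_(x | g v x && (x != c)) share v =
    (\sum_(x | g v x && (x != c)) 1) * share v.
  by rewrite mulr_suml; under [RHS]eq_bigr do rewrite mul1r.
have : (deg g v)%:R = 1 + \sum_(x | g v x && (x != c)) 1 :> R.
  by rewrite -sumr1_deg (bigD1 c).
move: (\sum_(x | _) _) => K deg_v.
have X_ge1 : 1 <= Num.sqrt (deg g v)%:R :> R.
  by rewrite sqrtr_ge ?expr1n ?ler1n ?(deg_gt0 hvc).
rewrite /arc_weight /hub_share sqrtrM ?ler0n // (invfM_split (s := s)).
- by rewrite sqr_sqrtr ?ler0n // deg_v; congr (_ - _ * _); rewrite addrC addKr.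
- by rewrite gt_eqF ?sqrt_hub_gt0.
- by rewrite gt_eqF ?(lt_le_trans ltr01).
- by rewrite gt_eqF ?(lt_le_trans ltr01) ?ler_wpDl ?sqrtr_ge0.
Qed.

Lemma hub_arcs_ge :
  s - avoid_sum (fun u _ => share u) <= \sum_(v | g c v) arc_weight R g c v.
Proof.
have sum_inv : \sum_(v | g c v) s^-1 = s.
  rewrite sumr_const (_ : #|_| = deg g c); last by apply: eq_card => v; rewrite inE.
  apply: (mulfI (lt0r_neq0 sqrt_hub_gt0)).
  by rewrite mulrnAr mulfV ?lt0r_neq0 ?sqrt_hub_gt0 // -expr2 sqr_sqrtr ?ler0n.
rewrite (eq_bigr _ hub_arc_weightE) sumrB sum_inv lerB //.
rewrite [leRHS]big_mkcond [leLHS]big_mkcond /=; apply: ler_sum => v _.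
case: (boolP (g c v)) => [hcv | _].
  have vc : v != c by apply: contraTneq hcv => ->; rewrite g_irr.
  by rewrite vc.
by case: ifP => // _; apply: sumr_ge0 => x _; apply: hub_share_ge0.
Qed.

Lemma avoid_arcs_ge :
  13/200 * avoid_sum (fun _ _ => 1) <=
    avoid_sum (arc_weight R g) - avoid_sum (fun u _ => share u) *+ 2.
Proof.
rewrite mulr2n {2}(sum_arcs_avoid_swap c g_sym share) opprD addrA.
rewrite -!sumrB mulr_sumr; apply: ler_sum => u uc.
rewrite mulr_sumr -!sumrB; apply: ler_sum => v /andP[huv vc].
rewrite mulr1; apply: weight_sub_shares_ge; last exact: hub_deg.
- exact: deg_gt0 huv.
- by apply: (deg_gt0 (v := u)); rewrite g_sym.
- exact: light_edges.
Qed.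

Lemma num_edges_le_avoid :
  (num_edges g)%:R *+ 2 <= (deg g c)%:R *+ 2 + avoid_sum (fun _ _ => 1 : R).
Proof.
have := handshake g_sym g_irr; rewrite -(ler_nat R) natr_sum natrM mulr_natl.
under eq_bigr do rewrite -sumr1_deg.
by rewrite (sum_arcs_hub c g_sym g_irr) // sumr1_deg.
Qed.

Lemma randic_ge_hub :
  s + 13/200 * ((num_edges g)%:R - (deg g c)%:R) <= randic R g.
Proof.
have -> : randic R g = 2^-1 * \sum_u \sum_(v | g u v) arc_weight R g u v by [].
rewrite (sum_arcs_hub c g_sym g_irr (F := arc_weight R g)); last first.
  by move=> u v; rewrite /arc_weight mulrC.
have := hub_arcs_ge; have := avoid_arcs_ge; have := num_edges_le_avoid.
set H := \sum_(v | g c v) _; set A := avoid_sum (arc_weight R g).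
set B := avoid_sum (fun u _ => share u); set N := avoid_sum (fun _ _ => 1 : R).
clearbody H A B N.
have -> : 2^-1 * (H *+ 2 + A) = H + 2^-1 * A by rewrite mulr2n; field.
move=> hN hA hH; rewrite !mulr2n in hN hA; lra.
Qed.

End HubBound.

Lemma target_lt_hub_bound_real (R : rcfType) (D j k : R) :
  10 <= D -> 12 <= D + j -> 0 <= j -> 0 <= k -> 9/2 * j <= k + 1 ->
  Num.sqrt (D + j) + 2 * (k + 1) / ((D + 1 + j) * Num.sqrt (D + j))
    < Num.sqrt D + 13/200 * (k + 1 + j).
Proof.
move=> D_ge D_j_ge j_ge0 k_ge0 j_le.
have s_ge : 346/100 <= Num.sqrt (D + j) by apply: sqrtr_ge; lra.
have t_ge : 316/100 <= Num.sqrt D by apply: sqrtr_ge; lra.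
have s2 : Num.sqrt (D + j) ^+ 2 = D + j by rewrite sqr_sqrtr //; lra.
have t2 : Num.sqrt D ^+ 2 = D by rewrite sqr_sqrtr //; lra.
move: s_ge t_ge s2 t2; set s := Num.sqrt (D + j); set t := Num.sqrt D.
move=> s_ge t_ge s2 t2.
have t_le_s : t <= s by rewrite leNgt; apply/negP => s_lt_t; nra.
(* (s - t) * (s + t) = j and s + t >= 6.62 *)
have s_sub_t : (s - t) * (662/100) <= j by nra.
have den_ge : 4498/100 <= (D + 1 + j) * s by nra.
have : 2 * (k + 1) / ((D + 1 + j) * s) <= 2 * (k + 1) / (4498/100).
  rewrite ler_pdivrMr; last by lra.
  by rewrite mulrAC ler_pdivlMr; [apply: ler_wpM2l | ]; lra.
lra.
Qed.

Lemma target_lt_hub_bound (R : rcfType) (n j k D : nat) :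
  (13 <= n)%N -> (j <= 2)%N -> (9 * j <= 2 * (k + 1))%N -> (D + 1 + j = n)%N ->
  Num.sqrt ((n - 1)%:R : R) + (2 * (k + 1))%:R / (n%:R * Num.sqrt ((n - 1)%:R : R))
    < Num.sqrt (D%:R : R) + 13/200 * ((n + k)%:R - D%:R).
Proof.
move=> n_ge j_le2 j_k n_eq.
have -> : (n - 1 = D + j)%N by lia.
have -> : (n + k)%:R - D%:R = (k + 1 + j)%:R :> R.
  by rewrite -natrB; [congr (_%:R) | ]; lia.
rewrite -n_eq natrM !natrD; apply: target_lt_hub_bound_real.
- by rewrite (ler_nat R 10); lia.
- by rewrite -natrD (ler_nat R 12); lia.
- exact: ler0n.
- exact: ler0n.
- by move: j_k; rewrite -(ler_nat R) !natrM natrD; lra.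
Qed.

Theorem lemma3p9 (R : rcfType) (T : finType) (g : rel T) (k : nat) :
  simple_graph g -> connected_graph g -> (13 <= #|T|)%N ->
  [\/ [/\ max_deg g = (#|T| - 1)%N, num_edges g = (#|T| + k)%N & (1 <= k <= 10)%N],
      [/\ max_deg g = (#|T| - 2)%N, num_edges g = (#|T| + k)%N & (5 <= k <= 10)%N] |
      [/\ max_deg g = (#|T| - 3)%N, num_edges g = (#|T| + k)%N & (8 <= k <= 10)%N]] ->
  (Num.sqrt ((#|T| - 1)%:R : R)
     + (2 * (k + 1))%:R / ((#|T|)%:R * Num.sqrt ((#|T| - 1)%:R : R))
   < randic R g)%R.
Proof.
move=> [g_sym g_irr] _ n_ge13 cases.
have [j [j_le2 kj_le12 j_k D_eq m_eq]] : exists j, [/\ j <= 2, k + j <= 12,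
    9 * j <= 2 * (k + 1), max_deg g + 1 + j = #|T| & num_edges g = #|T| + k]%N.
  by case: cases => -[D_eq m_eq /andP[k_ge k_le]];
     [exists 0%N | exists 1%N | exists 2%N]; split; lia.
have [c max_c] := bigop.eq_bigmax (deg g) (leq_trans (isT : 0 < 13)%N n_ge13).
rewrite /max_deg max_c in D_eq.
have light_edges u v : g u v -> u != c -> v != c -> (deg g u + deg g v <= 16)%N.
  by move=> huv uc vc; have := deg_hub_edge_le g_irr huv uc vc; lia.
have := randic_ge_hub R g_sym g_irr (ltac:(lia) : (10 <= deg g c)%N) light_edges.
rewrite m_eq; apply: lt_le_trans; exact: target_lt_hub_bound n_ge13 j_le2 j_k D_eq.
Qed.
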